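(* Let $X\subset\mathbb{R}^n$ be a nonempty compact convex set with diameter $D_X:=\max_{x,y\in X}\|x-y\|$ (Euclidean norm). Let $u\in X$, $g\in\mathbb{R}^n$, $\beta>0$, $\eta>0$, and let $\phi(x):=\langle g,x\rangle+\frac{\beta}{2}\|x-u\|^2$. Consider the ACGM procedure described in the context, with tolerances $\delta^t\ge 0$. Let $\{\lambda^t\}_{t\ge1}\subset[0,1]$ be any predetermined sequence with $\lambda^1=1$, and define $\Lambda^1:=1$ and $\Lambda^t:=\Lambda^{t-1}(1-\lambda^t)$ for $t>1$. Suppose the step sizes $\alpha^t$ of the procedure are chosen so that $$\phi(u^t)\le \phi\big((1-\lambda^t)u^{t-1}+\lambda^t v^t\big)\quad\text{for all } t\ge 1 .$$ Then for all $t\ge 2$ (for which the iterates $u^1,\dots,u^t$ have been generated), $$\sum_{j=2}^t \frac{\lambda^j}{\Lambda^j}\max_{x\in X}\langle\nabla\phi(u^{j-1}),u^{j-1}-x\rangle \le \Big[\delta^1+\sum_{j=2}^t\frac{\lambda^j}{\Lambda^j}\Big(\delta^j+\Lambda^{j-1}\sum_{i=1}^{j-1}\frac{\lambda^i}{\Lambda^i}\delta^i\Big)\Big] + \frac{\beta D_X^2}{2}\Big[1+\sum_{j=2}^t\frac{\lambda^j}{\Lambda^j}\Big(\lambda^j+\Lambda^{j-1}\sum_{i=1}^{j-1}\frac{(\lambda^i)^2}{\Lambda^i}\Big)\Big].$$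
   Context: Note $\nabla\phi(x)=g+\beta(x-u)$. ACGM (approximate conditional gradient method) procedure for $\min_{x\in X}\phi(x)$, with input $u,g,\beta,\eta$ and a sequence of tolerances $\delta^t\ge0$: set $u^0:=u$. For $t=1,2,\dots$: compute $v^t\in X$ such that $\langle\nabla\phi(u^{t-1}),v^t-x\rangle\le\delta^t$ for all $x\in X$ (an approximate solution of the linear subproblem $\min_{x\in X}\langle\nabla\phi(u^{t-1}),x\rangle$). If $\langle\nabla\phi(u^{t-1}),u^{t-1}-v^t\rangle\le\eta-\delta^t$, stop and output $u^+:=u^{t-1}$. Otherwise set $u^t:=(1-\alpha^t)u^{t-1}+\alpha^t v^t$ with some step size $\alpha^t\in[0,1]$, and continue. *)

From HB Require Import structures.
From mathcomp Require Import all_boot all_order all_algebra.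
From mathcomp Require Import all_classical all_reals all_analysis.
Set Implicit Arguments. Unset Strict Implicit. Unset Printing Implicit Defensive.
Import Order.TTheory GRing.Theory Num.Theory.
Import numFieldNormedType.Exports.
Local Open Scope classical_set_scope.
Local Open Scope ring_scope.

Definition dotp (R : realType) (n : nat) (x y : 'rV[R]_n) : R :=
  \sum_(i < n) x ord0 i * y ord0 i.

Definition enorm (R : realType) (n : nat) (x : 'rV[R]_n) : R :=
  Num.sqrt (dotp x x).

Definition convex_set_rV (R : realType) (n : nat) (X : set 'rV[R]_n) : Prop :=
  forall x y, X x -> X y -> forall a : R, 0 <= a -> a <= 1 ->
    X ((1 - a) *: x + a *: y).

Definition is_diameter (R : realType) (n : nat) (X : set 'rV[R]_n) (D : R) : Prop :=
  (forall x y, X x -> X y -> enorm (x - y) <= D) /\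
  (exists x y, X x /\ X y /\ enorm (x - y) = D).

Definition phi (R : realType) (n : nat) (g u : 'rV[R]_n) (beta : R) (x : 'rV[R]_n) : R :=
  dotp g x + beta / 2 * (enorm (x - u)) ^+ 2.

Definition grad_phi (R : realType) (n : nat) (g u : 'rV[R]_n) (beta : R) (x : 'rV[R]_n)
  : 'rV[R]_n := g + beta *: (x - u).

(* max_{x in X} <c, y - x>, written as the supremum (attained for X compact nonempty). *)
Definition maxgap (R : realType) (n : nat) (X : set 'rV[R]_n) (c y : 'rV[R]_n) : R :=
  sup [set dotp c (y - x) | x in X].

(* Lambda^1 = 1, Lambda^t = Lambda^{t-1} (1 - lambda^t) for t > 1
   (Lambda^0 = 1 is an unused convention). *)
Fixpoint Lam (R : realType) (lam : nat -> R) (t : nat) : R :=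
  match t with
  | 0 => 1
  | 1 => 1
  | t'.+1 => Lam lam t' * (1 - lam t)
  end.

(* The iterates u^0..u^T of ACGM with tolerances delta, step sizes alpha,
   LMO outputs v, have all been generated (no stop before producing u^T),
   and the step sizes satisfy phi(u^t) <= phi((1-lambda^t) u^{t-1} + lambda^t v^t). *)
Definition ACGM_run (R : realType) (n : nat) (X : set 'rV[R]_n) (u g : 'rV[R]_n)
  (beta eta : R) (delta alpha lam : nat -> R) (us vs : nat -> 'rV[R]_n) (T : nat) : Prop :=
  us 0%N = u /\
  forall t, (1 <= t <= T)%N ->
    [/\ X (vs t) /\
          (forall x, X x -> dotp (grad_phi g u beta (us t.-1)) (vs t - x) <= delta t),
        eta - delta t < dotp (grad_phi g u beta (us t.-1)) (us t.-1 - vs t),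
        0 <= alpha t /\ alpha t <= 1,
        us t = (1 - alpha t) *: us t.-1 + alpha t *: vs t &
        phi g u beta (us t) <= phi g u beta ((1 - lam t) *: us t.-1 + lam t *: vs t)].

From HB Require Import structures.
From mathcomp Require Import all_boot all_order all_algebra.
From mathcomp Require Import all_classical all_reals all_analysis.
From mathcomp Require Import ring lra.
Import Order.TTheory GRing.Theory Num.Theory.
Import numFieldNormedType.Exports.
Local Open Scope classical_set_scope.
Local Open Scope ring_scope.

(* Fix x in X and put h_t := phi(u^t) - phi(x).  Since phi(u^t) is at most phi along the
   segment from u^{t-1} towards v^t, its quadratic expansion and the LMO tolerance give
     lam_t <grad phi(u^{t-1}), u^{t-1} - x> <= phi(u^{t-1}) - phi(u^t) + c_t,
   with c_t = lam_t delta_t + beta D^2 lam_t^2 / 2.  Convexity of phi turns this into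
   h_t <= (1 - lam_t) h_{t-1} + c_t, i.e. h_t / Lam_t <= sum_{i <= t} c_i / Lam_i.
   Dividing the first inequality by Lam_t and summing over j, the differences
   h_{j-1} - h_j telescope up to the terms lam_j / Lam_j * h_{j-1}, which the
   recursion bounds. *)

Arguments Lam {R} lam t : simpl never.

Lemma telescope_sumr_pred (V : zmodType) (m n : nat) (F : nat -> V) : (m <= n)%N ->
  \sum_(m.+1 <= j < n.+1) (F j.-1 - F j) = F m - F n.
Proof.
move=> mn; rewrite big_add1 /=.
under eq_bigr do rewrite -opprB.
by rewrite sumrN telescope_sumr // opprB.
Qed.

Section LamWeights.
Context {R : realType} {lam : nat -> R}.
Hypothesis lam01 : forall t, (1 <= t)%N -> 0 <= lam t /\ lam t <= 1.

Lemma Lam1 : Lam lam 1 = 1.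
Proof. by []. Qed.

Lemma Lam_rec j : (2 <= j)%N -> Lam lam j = Lam lam j.-1 * (1 - lam j).
Proof. by case: j => [|[|j]]. Qed.

Lemma Lam_ge0 t : 0 <= Lam lam t.
Proof.
elim: t => [|[|t] IH] //; rewrite Lam_rec //.
by have [_ ?] := lam01 t.+2 isT; apply: mulr_ge0 => //; lra.
Qed.

(* An equality unless Lam j = 0, where the left-hand side is 0 since x / 0 = 0. *)
Lemma Lam_ratio_le j : (2 <= j)%N -> (1 - lam j) / Lam lam j <= (Lam lam j.-1)^-1.
Proof.
move=> j2; have [->|] := eqVneq (Lam lam j) 0.
  by rewrite invr0 mulr0 invr_ge0 Lam_ge0.
rewrite Lam_rec // mulf_eq0 negb_or => /andP[L0 l0].
by rewrite invfM mulrCA mulfV // mulr1.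
Qed.

Lemma Lam_weight_scale j x : (2 <= j)%N ->
  lam j / Lam lam j * x = lam j / Lam lam j * Lam lam j.-1 * (x / Lam lam j.-1).
Proof.
move=> j2; have [L0|L0] := eqVneq (Lam lam j.-1) 0.
  by rewrite Lam_rec // L0 mul0r invr0 !mulr0 !mul0r.
by rewrite -[RHS]mulrA [Lam _ _ * _]mulrC mulfVK.
Qed.

Variables (h c gap : nat -> R) (T : nat).
Hypothesis lam1 : lam 1%N = 1.
Hypothesis h_ge0 : forall t, (1 <= t <= T)%N -> 0 <= h t.
Hypothesis h_rec : forall t, (1 <= t <= T)%N -> h t <= (1 - lam t) * h t.-1 + c t.
Hypothesis gap_le : forall j, (2 <= j <= T)%N -> lam j * gap j <= h j.-1 - h j + c j.

Lemma scaled_h_le_sum t : (1 <= t <= T)%N ->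
  h t / Lam lam t <= \sum_(1 <= i < t.+1) c i / Lam lam i.
Proof.
elim: t => [|[|t] IH] // tT.
  by rewrite big_nat1 Lam1 !divr1; have := h_rec _ tT; rewrite lam1 subrr mul0r add0r.
have tT' : (1 <= t.+1 <= T)%N by case/andP: tT => _ /ltnW ->.
have Linv : 0 <= (Lam lam t.+2)^-1 by rewrite invr_ge0 Lam_ge0.
apply: le_trans (ler_wpM2r Linv (h_rec _ tT)) _.
rewrite big_nat_recr //= mulrDl lerD2r mulrAC.
apply: le_trans (IH tT'); rewrite [X in _ <= X]mulrC.
by have /(ler_wpM2r (h_ge0 _ tT')) := @Lam_ratio_le t.+2 isT.
Qed.

Lemma weighted_prev_h_le j : (2 <= j <= T)%N ->
  lam j / Lam lam j * h j.-1
  <= lam j / Lam lam j * (Lam lam j.-1 * \sum_(1 <= i < j) c i / Lam lam i).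
Proof.
case: j => [|[|j]] // /andP[_ jT]; rewrite Lam_weight_scale //= -mulrA.
have [l0 _] := lam01 j.+2 isT.
apply: ler_wpM2l; first by rewrite divr_ge0 ?Lam_ge0.
apply: ler_wpM2l; first exact: Lam_ge0.
by apply: scaled_h_le_sum; rewrite /= ltnW.
Qed.

Lemma scaled_decrease_le j : (2 <= j <= T)%N ->
  (h j.-1 - h j) / Lam lam j
  <= (h j.-1 / Lam lam j.-1 - h j / Lam lam j) + lam j / Lam lam j * h j.-1.
Proof.
case: j => [|[|j]] // /andP[_ jT] /=.
have hj : 0 <= h j.+1 by apply: h_ge0; rewrite /= ltnW.
have /(ler_wpM2r hj) /= := @Lam_ratio_le j.+2 isT.
have -> : (h j.+1 - h j.+2) / Lam lam j.+2 = (1 - lam j.+2) / Lam lam j.+2 * h j.+1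
  + lam j.+2 / Lam lam j.+2 * h j.+1 - h j.+2 / Lam lam j.+2 by ring.
rewrite mulrC; lra.
Qed.

Lemma weighted_gap_sum_le : (2 <= T)%N ->
  \sum_(2 <= j < T.+1) lam j / Lam lam j * gap j
  <= c 1%N + \sum_(2 <= j < T.+1) (c j / Lam lam j
       + lam j / Lam lam j * (Lam lam j.-1 * \sum_(1 <= i < j) c i / Lam lam i)).
Proof.
move=> T2; pose F t := h t / Lam lam t.
have step j : (2 <= j < T.+1)%N -> lam j / Lam lam j * gap j
    <= (F j.-1 - F j) + (c j / Lam lam j
       + lam j / Lam lam j * (Lam lam j.-1 * \sum_(1 <= i < j) c i / Lam lam i)).
  rewrite ltnS => jT.
  have Linv : 0 <= (Lam lam j)^-1 by rewrite invr_ge0 Lam_ge0.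
  have := ler_wpM2r Linv (gap_le _ jT); rewrite mulrDl -mulrAC => gapj.
  apply: le_trans gapj _.
  have := scaled_decrease_le _ jT; have := weighted_prev_h_le _ jT; rewrite /F.
  lra.
apply: le_trans (ler_sum_nat step) _; rewrite big_split telescope_sumr_pred ?(ltnW T2) //=.
have h1 : h 1%N <= c 1%N.
  by have := h_rec _ (ltnW T2 : (1 <= 1 <= T)%N); rewrite lam1 subrr mul0r add0r.
have FT : 0 <= F T.
  by apply: divr_ge0; [apply: h_ge0; rewrite leqnn andbT ltnW | exact: Lam_ge0].
rewrite /F in FT; rewrite /F Lam1 divr1; lra.
Qed.

End LamWeights.

Section EuclideanRows.
Context {R : realType} {n : nat}.
Implicit Types (a x y : 'rV[R]_n).

Lemma dotpC x y : dotp x y = dotp y x.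
Proof. by apply: eq_bigr => i _; rewrite mulrC. Qed.

Lemma dotp_ge0 x : 0 <= dotp x x.
Proof. by apply: sumr_ge0 => i _; rewrite -expr2 sqr_ge0. Qed.

Lemma enorm_sqr x : enorm x ^+ 2 = dotp x x.
Proof. by rewrite sqr_sqrtr // dotp_ge0. Qed.

Lemma dotpDr a x y : dotp a (x + y) = dotp a x + dotp a y.
Proof. by rewrite /dotp -big_split; apply: eq_bigr => i _; rewrite mxE mulrDr. Qed.

Lemma dotpNr a x : dotp a (- x) = - dotp a x.
Proof. by rewrite /dotp -sumrN; apply: eq_bigr => i _; rewrite mxE mulrN. Qed.

Lemma dotpBr a x y : dotp a (x - y) = dotp a x - dotp a y.
Proof. by rewrite dotpDr dotpNr. Qed.

Lemma dotpZr a (k : R) x : dotp a (k *: x) = k * dotp a x.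
Proof. by rewrite /dotp mulr_sumr; apply: eq_bigr => i _; rewrite mxE mulrCA. Qed.

Lemma dotpZl a (k : R) x : dotp (k *: x) a = k * dotp x a.
Proof. by rewrite dotpC dotpZr dotpC. Qed.

Lemma dotp_le_diameter (X : set 'rV[R]_n) (D : R) x y :
  is_diameter X D -> X x -> X y -> dotp (x - y) (x - y) <= D ^+ 2.
Proof.
move=> [diam _] Xx Xy; have xyD := diam _ _ Xx Xy.
by rewrite -enorm_sqr !expr2; apply: ler_pM; rewrite ?sqrtr_ge0.
Qed.

Lemma phi_expand (g u : 'rV[R]_n) (beta : R) x y :
  phi g u beta (x + y)
  = phi g u beta x + dotp (grad_phi g u beta x) y + beta / 2 * dotp y y.
Proof.
rewrite /phi !enorm_sqr /grad_phi /dotp !mulr_sumr -!big_split /=.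
by apply: eq_bigr => i _; rewrite !mxE; field.
Qed.

Lemma phi_ge_linearization (g u : 'rV[R]_n) (beta : R) x y : 0 <= beta ->
  phi g u beta x - dotp (grad_phi g u beta x) (x - y) <= phi g u beta y.
Proof.
move=> beta_ge0; rewrite -{2}(subrKC x y) phi_expand -[x - y]opprB dotpNr opprK.
by rewrite lerDl mulr_ge0 ?divr_ge0 ?dotp_ge0.
Qed.

End EuclideanRows.

Section ACGM.
Context {R : realType} {n : nat} {X : set 'rV[R]_n} {D : R} {u g : 'rV[R]_n}
  {beta eta : R} {delta alpha lam : nat -> R} {us vs : nat -> 'rV[R]_n} {T : nat}.
Hypothesis X_convex : convex_set_rV X.
Hypothesis X_diam : is_diameter X D.
Hypothesis Xu : X u.
Hypothesis beta_ge0 : 0 <= beta.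
Hypothesis lam01 : forall t, (1 <= t)%N -> 0 <= lam t /\ lam t <= 1.
Hypothesis run : ACGM_run X u g beta eta delta alpha lam us vs T.

Local Notation ph := (phi g u beta).
Local Notation G := (grad_phi g u beta).

Lemma acgm_iterate_in t : (t <= T)%N -> X (us t).
Proof.
case: run => us0 step; elim: t => [|t IH] tT; first by rewrite us0.
have [[Xv _] _ [a0 a1] -> _] := step t.+1 tT.
by apply: X_convex => //; apply: IH; apply: ltnW.
Qed.

Definition acgm_err t := lam t * delta t + beta * D ^+ 2 / 2 * lam t ^+ 2.

Lemma acgm_descent t x : (1 <= t <= T)%N -> X x ->
  lam t * dotp (G (us t.-1)) (us t.-1 - x) <= ph (us t.-1) - ph (us t) + acgm_err t.
Proof.
move=> tT Xx; have [_ /(_ t tT) [[Xv lmo] _ _ _]] := run.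
have Xa : X (us t.-1).
  by apply: acgm_iterate_in; case/andP: tT => _; apply: leq_trans (leq_pred t).
have [l0 _] := lam01 t (proj1 (andP tT)).
move: Xa Xv lmo; set a := us t.-1; set v := vs t; set l := lam t => Xa Xv lmo.
have -> : (1 - l) *: a + l *: v = a + l *: (v - a).
  by apply/rowP => i; rewrite !mxE; ring.
rewrite phi_expand !dotpZr dotpZl => descent.
have split_va : dotp (G a) (v - a) = dotp (G a) (v - x) - dotp (G a) (a - x).
  by rewrite -dotpBr opprB addrA subrK.
have lmo_x : l * dotp (G a) (v - x) <= l * delta t by apply: ler_wpM2l => //; apply: lmo.
have quad : beta / 2 * (l * (l * dotp (v - a) (v - a))) <= beta * D ^+ 2 / 2 * l ^+ 2.
  rewrite (_ : _ * l ^+ 2 = beta / 2 * (l * (l * D ^+ 2))); last by ring.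
  apply: ler_wpM2l; first by rewrite divr_ge0.
  do 2 apply: ler_wpM2l => //; exact: dotp_le_diameter X_diam Xv Xa.
move: descent; rewrite split_va mulrBr /acgm_err -/l; lra.
Qed.

Hypothesis X_neq0 : X !=set0.

Lemma acgm_maxgap_le t : (1 <= t <= T)%N ->
  lam t * maxgap X (G (us t.-1)) (us t.-1) <= ph (us t.-1) - ph (us t) + acgm_err t.
Proof.
move=> tT; have [x0 Xx0] := X_neq0; have [l0 _] := lam01 t (proj1 (andP tT)).
have [l_eq0|l_neq0] := eqVneq (lam t) 0.
  by have := acgm_descent _ _ tT Xx0; rewrite l_eq0 !mul0r.
have l_gt0 : 0 < lam t by rewrite lt0r l_neq0.
rewrite mulrC -ler_pdivlMr //; apply: ge_sup; first by exists (dotp (G (us t.-1)) (us t.-1 - x0)), x0.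
by move=> _ [x Xx <-]; rewrite ler_pdivlMr // mulrC; apply: acgm_descent.
Qed.

Lemma acgm_gap_rec x t : X x -> (1 <= t <= T)%N ->
  ph (us t) - ph x <= (1 - lam t) * (ph (us t.-1) - ph x) + acgm_err t.
Proof.
move=> Xx tT; have [l0 _] := lam01 t (proj1 (andP tT)).
have := acgm_descent _ _ tT Xx; have := phi_ge_linearization g u beta (us t.-1) x beta_ge0.
set d := dotp _ _ => lin desc.
have : lam t * (ph (us t.-1) - ph x) <= lam t * d by apply: ler_wpM2l => //; lra.
lra.
Qed.

Lemma acgm_err_weighted_sum : lam 1%N = 1 ->
  acgm_err 1 + \sum_(2 <= j < T.+1) (acgm_err j / Lam lam j
     + lam j / Lam lam j * (Lam lam j.-1 * \sum_(1 <= i < j) acgm_err i / Lam lam i))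
  = (delta 1%N + \sum_(2 <= j < T.+1) lam j / Lam lam j *
        (delta j + Lam lam j.-1 * \sum_(1 <= i < j) lam i / Lam lam i * delta i))
     + beta * D ^+ 2 / 2 *
       (1 + \sum_(2 <= j < T.+1) lam j / Lam lam j *
        (lam j + Lam lam j.-1 * \sum_(1 <= i < j) lam i ^+ 2 / Lam lam i)).
Proof.
move=> lam1; set K := beta * D ^+ 2 / 2.
have split_err i :
    acgm_err i / Lam lam i = lam i / Lam lam i * delta i + K * (lam i ^+ 2 / Lam lam i).
  by rewrite /acgm_err /K; ring.
have split_sum j : \sum_(1 <= i < j) acgm_err i / Lam lam i
    = \sum_(1 <= i < j) lam i / Lam lam i * delta i
      + K * \sum_(1 <= i < j) lam i ^+ 2 / Lam lam i.
  by rewrite mulr_sumr -big_split; apply: eq_bigr => i _; apply: split_err.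
have err1 : acgm_err 1 = delta 1%N + K by rewrite /acgm_err lam1 /K; ring.
rewrite err1 mulrDr mulr1 mulr_sumr addrACA -big_split /=; congr (_ + _).
by apply: eq_bigr => j _; rewrite split_sum split_err; ring.
Qed.

End ACGM.

Theorem mainTheorem1 (R : realType) (n : nat) (X : set 'rV[R]_n) (D : R)
  (u g : 'rV[R]_n) (beta eta : R) (delta alpha lam : nat -> R)
  (us vs : nat -> 'rV[R]_n) (T : nat) :
  X !=set0 -> compact X -> convex_set_rV X -> is_diameter X D ->
  X u -> 0 < beta -> 0 < eta ->
  (forall t, (1 <= t)%N -> 0 <= delta t) ->
  (forall t, (1 <= t)%N -> 0 <= lam t /\ lam t <= 1) ->
  lam 1%N = 1 ->
  ACGM_run X u g beta eta delta alpha lam us vs T ->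
  (2 <= T)%N ->
  \sum_(2 <= j < T.+1) lam j / Lam lam j * maxgap X (grad_phi g u beta (us j.-1)) (us j.-1)
  <= (delta 1%N + \sum_(2 <= j < T.+1) lam j / Lam lam j *
        (delta j + Lam lam j.-1 * \sum_(1 <= i < j) lam i / Lam lam i * delta i))
     + beta * D ^+ 2 / 2 *
       (1 + \sum_(2 <= j < T.+1) lam j / Lam lam j *
        (lam j + Lam lam j.-1 * \sum_(1 <= i < j) lam i ^+ 2 / Lam lam i)).
Proof.
move=> X_neq0 _ X_convex X_diam Xu /ltW beta_ge0 _ _ lam01 lam1 run T2.
(* Comparing with the best iterate instead of a minimiser of phi on X keeps h >= 0
   without any appeal to compactness. *)
have [k _ k_min] := arg_minP (fun k : 'I_T.+1 => phi g u beta (us k)) (isT : xpredT ord0).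
have Xk : X (us k) by apply: (acgm_iterate_in X_convex Xu run); rewrite -ltnS.
rewrite -acgm_err_weighted_sum //.
pose h t := phi g u beta (us t) - phi g u beta (us k).
pose gap j := maxgap X (grad_phi g u beta (us j.-1)) (us j.-1).
apply: (weighted_gap_sum_le lam01 h _ gap) => // [t /andP[_ tT] | t tT | j /andP[j2 jT]].
- by rewrite subr_ge0; apply: (k_min (Ordinal (tT : (t < T.+1)%N))).
- exact: (acgm_gap_rec X_convex X_diam Xu beta_ge0 lam01 run _ _ Xk tT).
- rewrite /h opprB [_ - _ + (_ - _)]addrA subrK.
  apply: (acgm_maxgap_le X_convex X_diam Xu beta_ge0 lam01 run X_neq0).
  by rewrite jT (leq_trans _ j2).
Qed.
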